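(* Let $S$ be a finite alphabet and let $U,V,W$ be finite sets of words over $S$. Let $L$ be a language over $S$ such that every element of $L$ has the form $ac^nb$ with $a\in U$, $b\in V$, $c\in W$, $n\ge 0$. Then $L$ is a regular language if and only if for every $a\in U$, $b\in V$, $c\in W$ the set $$N_{a,b,c}=\{n\in\mathbb Z_{\ge 0}\mid ac^nb\in L\}$$ is the union of a finite set and finitely many one-sided arithmetic progressions $\{\alpha+t\beta\mid t\ge 0\}$.
   Context: A regular language is one recognized by a finite automaton (equivalently, described by a regular expression). *)

From mathcomp Require Import all_boot.
Set Implicit Arguments. Unset Strict Implicit. Unset Printing Implicit Defensive.

Record dfa (S : finType) := Dfa {
  dfa_state : finType;
  dfa_start : dfa_state;
  dfa_final : pred dfa_state;
  dfa_trans : dfa_state -> S -> dfa_state }.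

Definition dfa_accept (S : finType) (A : dfa S) (w : seq S) : bool :=
  @dfa_final S A (foldl (@dfa_trans S A) (@dfa_start S A) w).

Definition regular (S : finType) (L : seq S -> Prop) : Prop :=
  exists A : dfa S, forall w, L w <-> dfa_accept A w.

Definition wpow (S : Type) (c : seq S) (n : nat) : seq S := flatten (nseq n c).

Definition fin_union_progressions (N : nat -> Prop) : Prop :=
  exists (F : seq nat) (P : seq (nat * nat)),
    forall n, N n <-> (n \in F \/ exists2 p, p \in P & exists t, n = p.1 + t * p.2).

From mathcomp Require Import all_boot zify boolp.
Set Implicit Arguments. Unset Strict Implicit. Unset Printing Implicit Defensive.

(** A DFA run on [a c^n b] reaches the state [h^n(s)], where [s] is the state
    after [a] and [h] reads one copy of [c]; on a finite state set this orbit
    is eventually periodic, hence so is [N_{a,b,c}], and an eventually periodic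
    set of naturals is a finite set plus finitely many progressions.
    Conversely, the hypothesis makes [L] a finite union of languages
    [a c^α (c^β)^* b].  Such a language has finitely many left quotients:
    a long prefix of one of its words starts with [a d] (with [d = c^β]), and
    deleting that [d] does not change the quotient.  A finite union of
    languages with finitely many left quotients again has this property, and
    such a language is regular (Myhill–Nerode). *)

Lemma catI (T : Type) : right_injective (@cat T).
Proof. by move=> s t1 t2; elim: s => //= x s IHs [/IHs]. Qed.

Lemma cat_drop_prefix (T : Type) (u w p r : seq T) :
  size p <= size u -> u ++ w = p ++ r -> u = p ++ drop (size p) u.
Proof.
move=> le_pu e; rewrite -{1}(cat_take_drop (size p) u).
by rewrite -(takel_cat w le_pu) e take_size_cat.
Qed.

Section WordPowers.
Variable T : Type.
Implicit Types c : seq T.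

Lemma wpowS c n : wpow c n.+1 = c ++ wpow c n. Proof. by []. Qed.

Lemma wpowD c m n : wpow c (m + n) = wpow c m ++ wpow c n.
Proof. by elim: m => //= m IHm; rewrite addSn !wpowS IHm catA. Qed.

Lemma wpowM c t k : wpow c (t * k) = wpow (wpow c k) t.
Proof. by elim: t => //= t IHt; rewrite mulSn wpowD IHt. Qed.

Lemma size_wpow c n : size (wpow c n) = n * size c.
Proof. by elim: n => //= n IHn; rewrite wpowS size_cat IHn mulSn. Qed.

Lemma foldl_wpow (A : Type) (f : A -> T -> A) c n x :
  foldl f x (wpow c n) = iter n (fun y => foldl f y c) x.
Proof. by elim: n x => // n IHn x; rewrite wpowS foldl_cat IHn iterSr. Qed.

End WordPowers.

Lemma periodicM (A : Type) (f : nat -> A) i p :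
  (forall n, i <= n -> f (n + p) = f n) ->
  forall k n, i <= n -> f (n + k * p) = f n.
Proof.
move=> fp; elim=> [|k IHk] n le_in; first by rewrite addn0.
have -> : n + k.+1 * p = n + k * p + p by rewrite mulSn; lia.
by rewrite fp ?IHk // (leq_trans le_in (leq_addr _ _)).
Qed.

Lemma iter_eventually_periodic (T : finType) (h : T -> T) x :
  exists i p, 0 < p /\ forall n, i <= n -> iter (n + p) h x = iter n h x.
Proof.
pose f (k : 'I_#|T|.+1) := iter k h x.
have /injectivePn [k1 [k2 neq_k eq_f]] : ~~ injectiveb f.
  by apply/injectiveP => /leq_card; rewrite card_ord ltnn.
have [i [j [lt_ij eq_ij]]] : exists i j, i < j /\ iter i h x = iter j h x.
  case: (ltngtP k1 k2) => [lt_k | lt_k | /val_inj eq_k]; last by rewrite eq_k eqxx in neq_k.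
    by exists k1, k2.
  by exists k2, k1.
exists i, (j - i); split=> [|n le_in]; first by rewrite subn_gt0.
have -> : n + (j - i) = (n - i) + j by lia.
by rewrite iterD -eq_ij -iterD subnK.
Qed.

Lemma fin_union_progressions_ext (N N' : nat -> Prop) :
  (forall n, N n <-> N' n) -> fin_union_progressions N -> fin_union_progressions N'.
Proof. by move=> eN [F [P NP]]; exists F, P => n; rewrite -eN. Qed.

Lemma fin_union_progressions_periodic (N : pred nat) i p :
  0 < p -> (forall n, i <= n -> N (n + p) = N n) ->
  fin_union_progressions (fun n => N n).
Proof.
move=> p_gt0 /periodicM Np.
exists [seq n <- iota 0 i | N n], [seq (r, p) | r <- iota i p & N r] => n.
split=> [Nn | [|[_ /mapP [r + ->] [t ->]]]]; last 2 first.
- by rewrite mem_filter => /andP [].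
- by rewrite mem_filter mem_iota => /and3P [Nr le_ir _]; rewrite /= Np.
case: (ltnP n i) => [lt_ni | le_in]; first by left; rewrite mem_filter mem_iota Nn.
have nE : n = i + (n - i) %% p + (n - i) %/ p * p.
  by rewrite -addnA [_ %% _ + _]addnC -divn_eq subnKC.
right; exists (i + (n - i) %% p, p); last by exists ((n - i) %/ p).
rewrite map_f // mem_filter mem_iota leq_addr ltn_add2l ltn_pmod // !andbT.
by rewrite -(Np ((n - i) %/ p)) ?leq_addr // -nE.
Qed.

Lemma dfa_accept_pow_progressions (S : finType) (A : dfa S) (a b c : seq S) :
  fin_union_progressions (fun n => dfa_accept A (a ++ wpow c n ++ b)).
Proof.
pose run := foldl (@dfa_trans S A).
pose step s := run s c.
have accE n : dfa_accept A (a ++ wpow c n ++ b) =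
              @dfa_final S A (run (iter n step (run (@dfa_start S A) a)) b).
  by rewrite /dfa_accept !foldl_cat foldl_wpow.
have [i [p [p_gt0 per]]] := iter_eventually_periodic step (run (@dfa_start S A) a).
apply: (fin_union_progressions_periodic
  (N := fun n => dfa_accept A (a ++ wpow c n ++ b)) (i := i) p_gt0) => n le_in.
by rewrite !accE per.
Qed.

Section FiniteQuotients.
Variable S : finType.
Implicit Types (L : seq S -> Prop) (u w : seq S).

Definition finite_quotients L := exists (Q : finType) (R : Q -> seq S -> Prop),
  forall u, exists q, forall w, L (u ++ w) <-> R q w.

(* The automaton runs on the indices of the quotients, [None] being a dead state
   that is never reached. *)
Lemma finite_quotients_regular L : finite_quotients L -> regular L.
Proof.
case=> Q [R quotR].
pose start := [pick q | `[< forall w, L w <-> R q w >] ].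
pose step (s : option Q) (x : S) :=
  if s is Some q then [pick q' | `[< forall w, R q (x :: w) <-> R q' w >] ] else None.
pose final (s : option Q) := if s is Some q then `[< R q [::] >] else false.
have run u : exists2 q, foldl step start u = Some q &
                        forall w, L (u ++ w) <-> R q w.
  elim/last_ind: u => [|u x [q runq Lq]].
    rewrite /start; case: pickP => [q /asboolP | none]; first by exists q.
    by have [q Lq] := quotR [::]; have /asboolPn[] := negbT (none q).
  rewrite foldl_rcons runq /=; case: pickP => [q' /asboolP Rq' | none].
    by exists q' => // w; rewrite cat_rcons Lq.
  have [q' Lq'] := quotR (rcons u x); have /asboolPn[] := negbT (none q') => w.
  by rewrite -Lq' cat_rcons Lq.
exists (Dfa start final step) => u; have [q runq Lq] := run u.
by rewrite /dfa_accept /= runq -[u]cats0 Lq; apply: rwP; apply: asboolP.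
Qed.

Lemma finite_quotients_ext L L' :
  (forall w, L w <-> L' w) -> finite_quotients L -> finite_quotients L'.
Proof.
move=> eL [Q [R quotR]]; exists Q, R => u.
by have [q Lq] := quotR u; exists q => w; rewrite -eL.
Qed.

Lemma finite_quotients0 : finite_quotients (fun _ => False).
Proof. by exists unit, (fun _ _ => False) => u; exists tt. Qed.

Lemma finite_quotientsU L1 L2 :
  finite_quotients L1 -> finite_quotients L2 ->
  finite_quotients (fun w => L1 w \/ L2 w).
Proof.
move=> [Q1 [R1 quotR1]] [Q2 [R2 quotR2]].
exists (Q1 * Q2)%type, (fun q w => R1 q.1 w \/ R2 q.2 w) => u.
have [q1 L1q] := quotR1 u; have [q2 L2q] := quotR2 u.
by exists (q1, q2) => w; rewrite L1q L2q.
Qed.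

Lemma finite_quotients_bigcup (I : eqType) (r : seq I) (F : I -> seq S -> Prop) :
  (forall i, i \in r -> finite_quotients (F i)) ->
  finite_quotients (fun w => exists2 i, i \in r & F i w).
Proof.
elim: r => [|x r IHr] Fq.
  by apply: finite_quotients_ext finite_quotients0 => w; split=> // [[]].
have Fxq := Fq x (mem_head x r).
have Frq : finite_quotients (fun w => exists2 i, i \in r & F i w).
  by apply: IHr => i ri; apply: Fq; rewrite in_cons ri orbT.
apply: finite_quotients_ext (finite_quotientsU Fxq Frq) => w.
split=> [[Fxw | [i ri Fiw]] | [i]]; first by exists x; rewrite ?mem_head.
  by exists i; rewrite // in_cons ri orbT.
by rewrite in_cons => /predU1P [-> | ri] Fiw; [left | right; exists i].
Qed.

Lemma finite_quotients_short L B :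
  (forall u, (exists2 v, size v < B & forall w, L (u ++ w) <-> L (v ++ w)) \/
             (forall w, ~ L (u ++ w))) ->
  finite_quotients L.
Proof.
move=> short; exists (option {n : 'I_B & n.-tuple S}).
exists (fun q w => if q is Some v then L (tval (tagged v) ++ w) else False) => u.
case: (short u) => [[v lt_vB Lv] | Lu]; last by exists None => w; split=> // /Lu.
by exists (Some (@Tagged _ (Ordinal lt_vB) (fun n : 'I_B => n.-tuple S) (in_tuple v))).
Qed.

End FiniteQuotients.

Section LinearLanguages.
Variable S : finType.
Implicit Types (a b c d u v w : seq S).

Definition linear_lang a d b w := exists n, w = a ++ wpow d n ++ b.

Lemma linear_lang_cancel a d b w :
  size b < size (d ++ w) ->
  linear_lang a d b (a ++ d ++ w) <-> linear_lang a d b (a ++ w).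
Proof.
move=> lt_b; split=> [[[|n] e] | [n /catI ->]]; last first.
- by exists n.+1; rewrite wpowS -catA.
- by move: e; rewrite wpowS -catA => /catI/catI ->; exists n.
by move: lt_b (congr1 size e); rewrite !size_cat /=; lia.
Qed.

Lemma linear_lang_quotient_short a d b u :
  (exists2 v, size v <= size a + size d + size b &
     forall w, linear_lang a d b (u ++ w) <-> linear_lang a d b (v ++ w)) \/
  (forall w, ~ linear_lang a d b (u ++ w)).
Proof.
have [m] := ubnP (size u); elim: m u => // m IHm u /ltnSE le_um.
have [short | long] := leqP (size u) (size a + size d + size b).
  by left; exists u.
have [[w0 [k e]] | dead] := lem (exists w, linear_lang a d b (u ++ w)); last first.
  by right=> w Lw; apply: dead; exists w.
have {k e}[k e] : exists k, u ++ w0 = (a ++ d) ++ (wpow d k ++ b).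
  case: k e => [|k] e; last by exists k; rewrite e wpowS -!catA.
  by move: long (congr1 size e); rewrite !size_cat /=; lia.
have d_gt0 : 0 < size d.
  by move: long (congr1 size e); rewrite !size_cat size_wpow; case: (size d); lia.
have le_adu : size (a ++ d) <= size u by rewrite size_cat; lia.
set v := drop (size (a ++ d)) u.
have eu : u = a ++ d ++ v by rewrite catA; apply: cat_drop_prefix e.
have shift w : linear_lang a d b (u ++ w) <-> linear_lang a d b ((a ++ v) ++ w).
  rewrite eu -!catA linear_lang_cancel // catA size_cat.
  by move: long; rewrite eu !size_cat; lia.
have lt_avm : size (a ++ v) < m by move: le_um; rewrite eu !size_cat; lia.
case: (IHm _ lt_avm) => [[v' le_v' Lv'] | dead]; last first.
  by right=> w; rewrite shift; apply: dead.
by left; exists v' => // w; rewrite shift.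
Qed.

Lemma linear_lang_finite_quotients a d b : finite_quotients (linear_lang a d b).
Proof.
exact: (finite_quotients_short (B := (size a + size d + size b).+1))
  (linear_lang_quotient_short a d b).
Qed.

Lemma fin_union_progressions_finite_quotients (N : nat -> Prop) a b c :
  fin_union_progressions N ->
  finite_quotients (fun w => exists2 n, N n & w = a ++ wpow c n ++ b).
Proof.
(* A finite set is a union of progressions of difference [0]. *)
case=> F [P NP]; pose P' := [seq (n, 0) | n <- F] ++ P.
have NP' n : N n <-> exists2 p, p \in P' & exists t, n = p.1 + t * p.2.
  rewrite NP; split=> [[Fn | [p Pp pn]] | [p]].
  - by exists (n, 0); [rewrite mem_cat map_f | exists 0; rewrite addn0].
  - by exists p; rewrite // mem_cat Pp orbT.
  rewrite mem_cat => /orP [/mapP [k Fk ->] [t ->] | Pp pn]; last by right; exists p.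
  by left; rewrite /= muln0 addn0.
have progE p t : (a ++ wpow c p.1) ++ wpow (wpow c p.2) t ++ b =
                 a ++ wpow c (p.1 + t * p.2) ++ b.
  by rewrite wpowD wpowM -!catA.
apply: finite_quotients_ext (finite_quotients_bigcup (r := P') (fun p _ =>
  linear_lang_finite_quotients (a ++ wpow c p.1) (wpow c p.2) b)) => w.
split=> [[p P'p [t ->]] | [n /NP' [p P'p [t ->]] ->]].
  by exists (p.1 + t * p.2); [apply/NP'; exists p => //; exists t | rewrite progE].
by exists p => //; exists t; rewrite progE.
Qed.

End LinearLanguages.

Theorem proposition2p2 (S : finType) (U V W : seq (seq S)) (L : seq S -> Prop)
  (hL : forall w, L w -> exists a b c n,
          [/\ a \in U, b \in V, c \in W & w = a ++ wpow c n ++ b]) :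
  regular L <->
  (forall a b c, a \in U -> b \in V -> c \in W ->
     fin_union_progressions (fun n => L (a ++ wpow c n ++ b))).
Proof.
split=> [[A accA] a b c _ _ _ | prog].
  apply: fin_union_progressions_ext (dfa_accept_pow_progressions A a b c) => n.
  by rewrite accA.
apply: finite_quotients_regular.
apply: finite_quotients_ext (finite_quotients_bigcup (fun a Ua =>
         finite_quotients_bigcup (fun b Vb =>
         finite_quotients_bigcup (fun c Wc =>
         fin_union_progressions_finite_quotients a b c (prog a b c Ua Vb Wc))))) => w.
split=> [[a _ [b _ [c _ [n Ln ->]]]] // | Lw].
have [a [b [c [n [Ua Vb Wc ew]]]]] := hL w Lw; subst w.
by exists a => //; exists b => //; exists c => //; exists n.
Qed.
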